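(* Let $A$ be a 2-sided residuated $\vee$-semilattice and let $F$ be a filter of $A$. Then $F$ equals the intersection of all $\vee$-prime filters of $A$ that contain $F$.
   Context: A residuated poset is a partially ordered semigroup $(A;\cdot,\le)$ with binary operations $\to,\leadsto$ such that $x\cdot y\le z$ iff $x\le y\to z$ iff $y\le x\leadsto z$. It is 2-sided if $x\cdot y\le x$ and $x\cdot y\le y$ for all $x,y$, and a residuated $\vee$-semilattice if $(A,\le)$ is a join-semilattice. A filter is a nonempty upward closed subset closed under $\cdot$. A filter $G$ is $\vee$-prime if $x\vee y\in G$ implies $x\in G$ or $y\in G$. The intersection of the empty family is $A$. *)

Record residuated_poset := {
  carrier :> Type;
  le : carrier -> carrier -> Prop;
  mul : carrier -> carrier -> carrier;
  rarr : carrier -> carrier -> carrier;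
  larr : carrier -> carrier -> carrier;
  le_refl : forall x, le x x;
  le_antisym : forall x y, le x y -> le y x -> x = y;
  le_trans : forall x y z, le x y -> le y z -> le x z;
  mul_assoc : forall x y z, mul x (mul y z) = mul (mul x y) z;
  mul_mono : forall x y x' y', le x x' -> le y y' -> le (mul x y) (mul x' y');
  residuation1 : forall x y z, le (mul x y) z <-> le x (rarr y z);
  residuation2 : forall x y z, le (mul x y) z <-> le y (larr x z)
}.

Definition two_sided (A : residuated_poset) : Prop :=
  forall x y : A, le A (mul A x y) x /\ le A (mul A x y) y.

Definition is_join (A : residuated_poset) (j : A -> A -> A) : Prop :=
  forall x y : A, le A x (j x y) /\ le A y (j x y) /\
    (forall z, le A x z -> le A y z -> le A (j x y) z).

Definition join_semilattice (A : residuated_poset) : Prop :=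
  exists j : A -> A -> A, is_join A j.

Definition filter (A : residuated_poset) (F : A -> Prop) : Prop :=
  (exists x, F x) /\
  (forall x y, F x -> le A x y -> F y) /\
  (forall x y, F x -> F y -> F (mul A x y)).

Definition join_prime_filter (A : residuated_poset) (j : A -> A -> A)
  (G : A -> Prop) : Prop :=
  filter A G /\ forall x y, G (j x y) -> G x \/ G y.

(* A ∨-prime filter containing F and omitting x is obtained as a maximal
   filter containing F and omitting x (Zorn).  Maximality is turned into
   primeness by the inequality (a ∨ c)(b ∨ c) <= ab ∨ c of 2-sided
   residuated ∨-semilattices: if a ∨ b ∈ M but a, b ∉ M, then x lies in the
   filters generated by M ∪ {a} and by M ∪ {b}; the inequality propagates
   a ∨ b ∈ M to x ∨ b ∈ M, then to x ∨ x ∈ M, so x ∈ M. *)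

From mathcomp Require Import ssreflect ssrfun ssrbool eqtype.
From mathcomp Require Import boolp classical_sets.

Local Open Scope classical_set_scope.

Lemma Zorn_bigcup_above {T : Type} (P : set (set T)) (B : set T) :
  P B ->
  (forall C, C `<=` P -> C !=set0 -> total_on C subset ->
     P (\bigcup_(X in C) X)) ->
  exists M, [/\ P M, B `<=` M & forall N, M `<` N -> ~ P N].
Proof.
move=> PB chainP.
have [C CQ totC|A [PBA maxA]] := Zorn_bigcup (P := [set X | P (B `|` X)]).
  have [->|/set0P C0] := eqVneq C set0.
    by rewrite /= bigcup_set0 setU0.
  rewrite /= -bigcupUr // -(bigcup_image C (setU B) id).
  apply: chainP; first by move=> _ [X CX <-]; exact: CQ.
    exact: image_nonempty.
  move=> _ _ [X CX <-] [Y CY <-].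
  by case: (totC X Y CX CY) => [XY|YX]; [left|right]; exact: setUS.
exists (B `|` A); split => // N [+ NBA] PN; rewrite subUset => -[BN AN].
apply: (maxA N); last by rewrite /= (setUidPr _ _).2.
by split=> // NA; apply: NBA => t /NA; right.
Qed.

Section Filters.
Context {A : residuated_poset}.
Local Infix "≤" := (le A) (at level 70).
Local Infix "⋅" := (mul A) (at level 40).

Lemma bigcup_chain_filter (C : set (set A)) :
  C `<=` filter A -> C !=set0 -> total_on C subset ->
  filter A (\bigcup_(X in C) X).
Proof.
move=> CF [X0 CX0] totC; have [[x X0x] _] := CF X0 CX0.
split; [by exists x, X0 | split].
  move=> y z [X CX Xy] yz; exists X => //.
  by have [_ [upX _]] := CF X CX; exact: upX yz.
move=> y z [X CX Xy] [Y CY Yz].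
have [XY|YX] := totC X Y CX CY.
  exists Y => //; have [_ [_ mulY]] := CF Y CY.
  by apply: mulY => //; exact: XY.
exists X => //; have [_ [_ mulX]] := CF X CX.
by apply: mulX => //; exact: YX.
Qed.

Inductive filter_gen (G : A -> Prop) (a : A) : A -> Prop :=
  | filter_gen_base g of G g : filter_gen G a g
  | filter_gen_elt : filter_gen G a a
  | filter_gen_mul u v of filter_gen G a u & filter_gen G a v :
      filter_gen G a (u ⋅ v)
  | filter_gen_up u z of filter_gen G a u & u ≤ z : filter_gen G a z.

Lemma filter_gen_filter G a : filter A (filter_gen G a).
Proof.
split; [by exists a; exact: filter_gen_elt | split].
  exact: filter_gen_up.
exact: filter_gen_mul.
Qed.

Section Join.
Context {j : A -> A -> A}.
Hypothesis join_j : is_join A j.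
Local Infix "⊔" := j (at level 50).

Lemma le_joinl x y : x ≤ x ⊔ y. Proof. by case: (join_j x y). Qed.
Lemma le_joinr x y : y ≤ x ⊔ y. Proof. by case: (join_j x y) => _ []. Qed.
Lemma join_le x y z : x ≤ z -> y ≤ z -> x ⊔ y ≤ z.
Proof. by case: (join_j x y) => _ [_]; apply. Qed.

Lemma joinC_le x y : x ⊔ y ≤ y ⊔ x.
Proof. exact: join_le (le_joinr y x) (le_joinl y x). Qed.

Lemma joinxx_le x : x ⊔ x ≤ x.
Proof. exact: join_le (le_refl A x) (le_refl A x). Qed.

Lemma join_le2r z {x y} : x ≤ y -> x ⊔ z ≤ y ⊔ z.
Proof.
move=> xy; apply: join_le (le_joinr y z).
exact: le_trans A _ _ _ xy (le_joinl y z).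
Qed.

Hypothesis two_sidedA : two_sided A.

Lemma mul_join_le x y z : (x ⊔ z) ⋅ (y ⊔ z) ≤ (x ⋅ y) ⊔ z.
Proof.
apply/residuation2/join_le; apply/residuation2; last first.
  exact: le_trans (proj2 (two_sidedA _ _)) (le_joinr _ _).
apply/residuation1/join_le; apply/residuation1; first exact: le_joinl.
exact: le_trans (proj1 (two_sidedA _ _)) (le_joinr _ _).
Qed.

Lemma filter_gen_join {G : A -> Prop} {a p} : filter A G -> G (a ⊔ p) ->
  filter_gen G a `<=` [set z | G (z ⊔ p)].
Proof.
move=> [_ [upG mulG]] Gap z; elim=> {z} [g Gg | | u v _ Gu _ Gv | u z _ Gu uz].
- exact: upG _ _ Gg (le_joinl g p).
- exact: Gap.
- exact: upG _ _ (mulG _ _ Gu Gv) (mul_join_le u v p).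
- exact: upG _ _ Gu (join_le2r p uz).
Qed.

Lemma filter_gen_common {G : A -> Prop} {a b x} : filter A G -> G (a ⊔ b) ->
  filter_gen G a x -> filter_gen G b x -> G x.
Proof.
move=> filG Gab Gax Gbx; have [_ [upG _]] := filG.
have Gxb := filter_gen_join filG Gab _ Gax.
have Gxx := filter_gen_join filG (upG _ _ Gxb (joinC_le x b)) _ Gbx.
exact: upG _ _ Gxx (joinxx_le x).
Qed.

Lemma maximal_filter_join_prime {M : A -> Prop} {x} :
  filter A M -> ~ M x -> (forall N, filter A N -> M `<` N -> N x) ->
  join_prime_filter A j M.
Proof.
move=> filM nMx maxM; split=> // a b Mab.
apply: contrapT => /not_orP[nMa nMb].
have gen_x c : ~ M c -> filter_gen M c x.
  move=> nMc; apply: maxM (filter_gen_filter M c) _.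
  split; first by move=> y; exact: filter_gen_base.
  by move=> /(_ c (filter_gen_elt M c)).
exact/nMx/(filter_gen_common filM Mab (gen_x a nMa) (gen_x b nMb)).
Qed.

End Join.

End Filters.

Theorem corollary5p6 (A : residuated_poset) (j : A -> A -> A)
  (H2 : two_sided A) (Hj : is_join A j) (F : A -> Prop) (HF : filter A F) :
  forall x : A,
    F x <-> (forall G : A -> Prop,
               join_prime_filter A j G -> (forall y, F y -> G y) -> G x).
Proof.
move=> x; split=> [Fx G _ FG | inG]; first exact: FG.
apply: contrapT => nFx.
have [||M [[filM nMx] FM maxM]] :=
  Zorn_bigcup_above [set G | filter A G /\ ~ G x] F.
- by split.
- move=> C CP C0 totC; split; last by case=> X /CP[].
  by apply: bigcup_chain_filter C0 totC => X /CP[].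
suff primeM : join_prime_filter A j M by exact: nMx (inG M primeM FM).
apply: (maximal_filter_join_prime Hj H2 filM nMx) => N filN MN.
by apply: contrapT => nNx; exact: maxM MN (conj filN nNx).
Qed.
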